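(* Let $n\geq m\geq 1$ and let $\mathcal{C},\mathcal{D}\subseteq\binom{[n]}{m}$ be collections of $m$-subsets of $[n]=\{1,\dots,n\}$ such that the strata $\mathcal{S}^{tnz}_{\mathcal{C}}(\mathbb{R})$ and $\mathcal{S}^{tnz}_{\mathcal{D}}(\mathbb{R})$ are non-empty. Then $\mathcal{S}^{tnz}_{\mathcal{C}}(\mathbb{R})$ and $\mathcal{S}^{tnz}_{\mathcal{D}}(\mathbb{R})$ lie in the same orbit of the action of $S_n$ on $\mathcal{S}^{tnz}_{mn}(\mathbb{R})$ if and only if for any two matrices $M=(v_1,\dots,v_n),N=(w_1,\dots,w_n)\in Mat^{tnz}_{mn}(\mathbb{R})$ with $GL_m(\mathbb{R})M\in\mathcal{S}^{tnz}_{\mathcal{C}}(\mathbb{R})$ and $GL_m(\mathbb{R})N\in\mathcal{S}^{tnz}_{\mathcal{D}}(\mathbb{R})$, the sets $S=\{v_1,\dots,v_n\}$ and $T=\{w_1,\dots,w_n\}$ are isomorphic generic point arrangements.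
   Context: A point arrangement $S=\{v_1,\dots,v_n\}\subset\mathbb{R}^m$ is generic if every subset of $S$ of cardinality at most $m$ is linearly independent. Two generic point arrangements $S_1,S_2\subset\mathbb{R}^m$ are isomorphic if there is a bijection $\sigma:S_1\to S_2$ such that for every $(m+1)$-subset $\{v_{i_1},\dots,v_{i_{m+1}}\}\subseteq S_1$, writing $v_{i_{m+1}}=\sum_{j=1}^m a_jv_{i_j}$ and $\sigma(v_{i_{m+1}})=\sum_{j=1}^m b_j\sigma(v_{i_j})$, one has $a_jb_j>0$ for all $1\le j\le m$. $Mat^{tnz}_{mn}(\mathbb{R})$ is the set of real $m\times n$ matrices all of whose maximal ($m\times m$) minors $\Delta_I(M)=\det(M_I)$, $I\in\binom{[n]}{m}$ ($M_I$ the submatrix on columns $I$), are nonzero; $Gr^{tnz}_{mn}(\mathbb{R})=GL_m(\mathbb{R})\backslash Mat^{tnz}_{mn}(\mathbb{R})$ (left multiplication). For $\mathcal{C}\subseteq\binom{[n]}{m}$ the stratum $\mathcal{S}^{tnz}_{\mathcal{C}}(\mathbb{R})$ is the set of $GL_m(\mathbb{R})M\in Gr^{tnz}_{mn}(\mathbb{R})$ such that either $\Delta_I(M)>0$ for all $I\in\mathcal{C}$ and $\Delta_I(M)<0$ for all $I\notin\mathcal{C}$, or $\Delta_I(M)<0$ for all $I\in\mathcal{C}$ and $\Delta_I(M)>0$ for all $I\notin\mathcal{C}$ (so $\mathcal{S}^{tnz}_{\mathcal{C}}=\mathcal{S}^{tnz}_{\binom{[n]}{m}\setminus\mathcal{C}}$).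 $\mathcal{S}^{tnz}_{mn}(\mathbb{R})$ denotes the set of non-empty strata. The symmetric group $S_n$ acts on $Gr^{tnz}_{mn}(\mathbb{R})$ by $\sigma\bullet GL_m(\mathbb{R})(v_1,\dots,v_n)=GL_m(\mathbb{R})(v_{\sigma^{-1}(1)},\dots,v_{\sigma^{-1}(n)})$, which induces an action on $\mathcal{S}^{tnz}_{mn}(\mathbb{R})$: $\sigma\bullet\mathcal{S}^{tnz}_{\mathcal{C}}(\mathbb{R})$ is the stratum containing $\sigma\bullet GL_m(\mathbb{R})M$ for any $GL_m(\mathbb{R})M\in\mathcal{S}^{tnz}_{\mathcal{C}}(\mathbb{R})$. *)

From HB Require Import structures.
From mathcomp Require Import all_boot all_order all_algebra all_fingroup.
From mathcomp Require Import reals.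
Set Implicit Arguments. Unset Strict Implicit. Unset Printing Implicit Defensive.
Import Order.TTheory GRing.Theory Num.Theory.
Local Open Scope ring_scope.

Section Defs.
Variables (R : realType) (m n : nat).

(* The maximal minor Delta_I(M) for I an m-subset of [n]: determinant of the
   submatrix on the columns of I taken in increasing order
   (enum I lists the elements of I in increasing order). *)
Definition minor (M : 'M[R]_(m, n)) (I : {set 'I_n}) : R :=
  \det (\matrix_(i < m, j < m) oapp (M i) 0 (onth (enum I) j)).

Definition tnz (M : 'M[R]_(m, n)) : Prop :=
  forall I : {set 'I_n}, #|I| = m -> minor M I != 0.

(* GL_m(R) M lies in the stratum S^tnz_C(R) (the condition is GL_m-invariant). *)
Definition in_stratum (C : {set {set 'I_n}}) (M : 'M[R]_(m, n)) : Prop :=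
  tnz M /\
  ((forall I : {set 'I_n}, #|I| = m ->
      (I \in C -> 0 < minor M I) /\ (I \notin C -> minor M I < 0)) \/
   (forall I : {set 'I_n}, #|I| = m ->
      (I \in C -> minor M I < 0) /\ (I \notin C -> 0 < minor M I))).

Definition perm_act (s : 'S_n) (M : 'M[R]_(m, n)) : 'M[R]_(m, n) :=
  \matrix_(i < m, j < n) M i ((s^-1)%g j).

Definition generic (M : 'M[R]_(m, n)) : Prop :=
  forall (k : nat) (f : 'I_k -> 'I_n), (k <= m)%N -> injective f ->
  forall c : 'I_k -> R, \sum_(i < k) c i *: col (f i) M = 0 ->
  forall i, c i = 0.

(* The arrangements given by the columns of M and N are isomorphic generic
   point arrangements; the bijection is given by a permutation p of the
   indices (v_i |-> w_{p i}).  For every (m+1)-subset, with any choice of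
   distinguished element v_k and remaining elements v_{g 0},...,v_{g (m-1)},
   the coefficients of the (unique) expansions have equal signs. *)
Definition iso_arrangement (M N : 'M[R]_(m, n)) : Prop :=
  generic M /\ generic N /\
  exists p : 'S_n,
    forall (g : 'I_m -> 'I_n) (k : 'I_n), injective g -> k \notin codom g ->
    forall a b : 'I_m -> R,
      col k M = \sum_(j < m) a j *: col (g j) M ->
      col (p k) N = \sum_(j < m) b j *: col (p (g j)) N ->
      forall j, 0 < a j * b j.

End Defs.

From HB Require Import structures.
From mathcomp Require Import all_boot all_order all_algebra all_fingroup.
From mathcomp Require Import reals lra zify.
Import Order.TTheory GRing.Theory Num.Theory.
Local Open Scope ring_scope.
Set Implicit Arguments. Unset Strict Implicit. Unset Printing Implicit Defensive.

(* For an injective choice h of m columns write coldet X h for the determinant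
   of these columns of X, and call X and Y coherent along f : 'I_n -> 'I_n when
   coldet X h * coldet Y (f \o h) has the same sign for all injective h.
   - Two tnz matrices lie in a common stratum iff they are coherent along the
     identity (coldet is a maximal minor up to a sign that depends on h only),
     and X is coherent with Y along s iff s . X is coherent with Y along id.
   - By Cramer's rule, exchanging column j of h for column k multiplies
     coldet X h * coldet Y (f \o h) by a_j b_j, the j-th expansion coefficients
     of column k of X and of column f k of Y.  Hence coherence along s makes all
     these coefficients agree in sign, i.e. the arrangements are isomorphic.
   - Conversely, an isomorphism p makes this product invariant in sign under
     exchanges and under reorderings; since any two injective choices are
     linked by such moves, X and Y are coherent along p.
   The theorem follows by chaining coherences through fixed members of the two
   strata. *)

Section ColumnDeterminants.
Variables (R : fieldType) (m n : nat).
Implicit Types (X : 'M[R]_(m, n)) (h : 'I_m -> 'I_n).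

Definition coldet X h : R := \det (\matrix_(i < m, j < m) X i (h j)).

Lemma coldet_ext X h h' : h =1 h' -> coldet X h = coldet X h'.
Proof. by move=> eh; congr (\det _); apply/matrixP=> i j; rewrite !mxE eh. Qed.

Lemma coldet_perm X h (t : 'S_m) : coldet X (h \o t) = (-1) ^+ t * coldet X h.
Proof.
rewrite /coldet; have -> : \matrix_(i < m, j < m) X i ((h \o t) j) =
    col_perm t (\matrix_(i < m, j < m) X i (h j)).
  by apply/matrixP=> i j; rewrite !mxE.
by rewrite col_permE det_mulmx det_perm odd_permV mulrC.
Qed.

Lemma coldet_perm_mul X Y h g (t : 'S_m) :
  coldet X (h \o t) * coldet Y (g \o t) = coldet X h * coldet Y g.
Proof. by rewrite !coldet_perm mulrACA -expr2 -signr_odd sqrr_sign mul1r. Qed.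

Lemma mulmx_cols X h (x : 'cV[R]_m) :
  (\matrix_(i < m, j < m) X i (h j)) *m x = \sum_j x j 0 *: col (h j) X.
Proof.
apply/matrixP=> r c; rewrite !mxE summxE; apply: eq_bigr => j _.
by rewrite !mxE (ord1 c) mulrC.
Qed.

Lemma coldet_cols_free X h (c : 'I_m -> R) : coldet X h != 0 ->
  \sum_j c j *: col (h j) X = 0 -> forall j, c j = 0.
Proof.
set A := \matrix_(i < m, j < m) X i (h j) => nzA comb j.
have uA : A \in unitmx by rewrite unitmxE unitfE.
have : A *m \col_l c l = 0.
  by rewrite mulmx_cols -[RHS]comb; apply: eq_bigr => l _; rewrite mxE.
move/(congr1 (mulmx (invmx A))); rewrite mulKmx // mulmx0.
by move/matrixP/(_ j 0); rewrite !mxE.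
Qed.

Lemma coldet_cols_span X h k : coldet X h != 0 ->
  exists a : 'I_m -> R, col k X = \sum_l a l *: col (h l) X.
Proof.
set A := \matrix_(i < m, j < m) X i (h j) => nzA.
have uA : A \in unitmx by rewrite unitmxE unitfE.
exists (fun l => (invmx A *m col k X) l 0).
by rewrite -mulmx_cols mulKVmx.
Qed.

Lemma cramer_rule (A : 'M[R]_m) (x c : 'cV[R]_m) j : A *m x = c ->
  x j 0 * \det A = \det (\matrix_(r, l) if l == j then c r 0 else A r l).
Proof.
move=> Axc; set Aj := \matrix_(r, l) _.
have cofj i : cofactor Aj i j = cofactor A i j.
  rewrite /cofactor; congr (_ * \det _).
  by apply/matrixP=> r l; rewrite !mxE eq_sym (negbTE (neq_lift j l)).
have : \adj A *m c = \det A *: x by rewrite -Axc mulmxA mul_adj_mx mul_scalar_mx.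
move/matrixP/(_ j 0); rewrite !mxE mulrC => <-.
rewrite (expand_det_col Aj j); apply: eq_bigr => i _.
by rewrite !mxE eqxx cofj mulrC.
Qed.

Definition upd h (j : 'I_m) (k : 'I_n) : 'I_m -> 'I_n :=
  fun l => if l == j then k else h l.

Lemma upd_inj h j k : injective h -> k \notin codom h -> injective (upd h j k).
Proof.
move=> hi kh l1 l2; rewrite /upd.
case: eqP => [->|_]; case: eqP => [->|_] // e; last exact: hi.
- by rewrite e codom_f in kh.
- by rewrite -e codom_f in kh.
Qed.

Lemma expansion_coef X h k (a : 'I_m -> R) j :
  col k X = \sum_l a l *: col (h l) X -> a j * coldet X h = coldet X (upd h j k).
Proof.
move=> e; have Ax : (\matrix_(i < m, l < m) X i (h l)) *m (\col_l a l) = col k X.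
  by rewrite mulmx_cols e; apply: eq_bigr => l _; rewrite mxE.
have := cramer_rule j Ax; rewrite mxE => ->; congr (\det _).
by apply/matrixP=> r l; rewrite !mxE /upd; case: eqP.
Qed.

End ColumnDeterminants.

Section Signs.
Variable R : realDomainType.

Lemma same_sign_trans (x y z : R) : 0 < x * y -> 0 < y * z -> 0 < x * z.
Proof. nra. Qed.

Lemma mul_self_gt0 (x : R) : x != 0 -> 0 < x * x.
Proof. by move=> nx; rewrite -expr2 exprn_even_gt0 //= nx orbT. Qed.

Lemma const_sign (T : finType) (P : pred T) (f : T -> R) :
  (forall x y, P x -> P y -> 0 < f x * f y) ->
  (forall x, P x -> 0 < f x) \/ (forall x, P x -> f x < 0).
Proof.
move=> pos; case: (pickP P) => [x0 Px0|noP]; last by left=> x; rewrite noP.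
have := pos x0 x0 Px0 Px0; have [f0_gt0|f0_le0] := ltP 0 (f x0) => f0_sq.
- by left=> x Px; have := pos x0 x Px0 Px; nra.
- by right=> x Px; have := pos x0 x Px0 Px; nra.
Qed.

End Signs.

(* Let Q be a real function of ordered m-selections of
   columns which does not change sign when the columns are reordered, nor when
   one column is exchanged for an unused one.  Then Q has a constant sign on all
   injective selections: any two of them are linked by such moves. *)
Section Exchange.
Variables (R : realDomainType) (m n : nat) (Q : ('I_m -> 'I_n) -> R).
Hypothesis Q_ext : forall h h', h =1 h' -> Q h = Q h'.
Hypothesis Q_reorder :
  forall h (t : 'S_m), injective h -> 0 < Q (h \o t) * Q h.
Hypothesis Q_exchange : forall h j k,
  injective h -> k \notin codom h -> 0 < Q h * Q (upd h j k).

Definition mismatch (g h : 'I_m -> 'I_n) := [set l | g l != h l].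

(* One move fixes the position j where g and h disagree, without creating a new
   disagreement: either h j is already used by g (swap it into place) or it is
   not (exchange it in). *)
Lemma exchange_step g h j : injective g -> injective h -> j \in mismatch g h ->
  exists2 g', injective g' &
    mismatch g' h \subset mismatch g h :\ j /\ 0 < Q g * Q g'.
Proof.
move=> gi hi; rewrite inE => gjh.
have [/codomP[i hj_gi]|hj_g] := boolP (h j \in codom g).
- have nij : i != j by apply: contraNneq gjh => eij; rewrite hj_gi eij.
  exists (g \o tperm i j); first by move=> l1 l2 /gi /perm_inj.
  split; last by rewrite mulrC; apply: Q_reorder.
  apply/subsetP => l; rewrite !inE /=; case: tpermP => [->|->|nli nlj].
  + by rewrite nij -hj_gi => _; apply: contra nij => /eqP/hi ->.
  + by rewrite hj_gi eqxx.
  + by move=> ->; rewrite andbT; apply/eqP.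
- exists (upd g j (h j)); first exact: upd_inj.
  split; last exact: Q_exchange.
  apply/subsetP => l; rewrite !inE /upd.
  by case: (eqVneq l j) => [->|]; rewrite ?eqxx.
Qed.

Lemma exchange_const_sign g h : injective g -> injective h -> 0 < Q g * Q h.
Proof.
move=> gi hi; have [d] := ubnP #|mismatch g h|.
elim: d g gi => // d IH g gi Sd.
case: (set_0Vmem (mismatch g h)) => [S0|[j jS]].
- have gh : g =1 h.
    move=> l; apply/eqP; apply: contraT => gl.
    have : l \in mismatch g h by rewrite inE.
    by rewrite S0 inE.
  rewrite (Q_ext gh); have := Q_reorder (1%g : 'S_m) hi.
  by rewrite (Q_ext (h' := h)) // => l; rewrite /= perm1.
- have [g' g'i [sub pos]] := exchange_step gi hi jS.
  apply: same_sign_trans pos (IH g' g'i _).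
  apply: leq_ltn_trans (subset_leq_card sub) _.
  by move: Sd; rewrite (cardsD1 j) jS.
Qed.

End Exchange.

Section Arrangements.
Variables (R : realType) (m n : nat).
Implicit Types (X Y : 'M[R]_(m, n)) (h : 'I_m -> 'I_n).

Lemma coldet_minor h : injective h -> exists t : 'S_m,
  forall X, coldet X h = (-1) ^+ t * minor X [set h j | j in 'I_m].
Proof.
move=> hi; set I := [set h j | j in 'I_m]; set s := enum I.
have sz : size s = m by rewrite -cardE card_imset // card_ord.
have hs j : h j \in s by rewrite mem_enum imset_f.
have lt j : (index (h j) s < m)%N by rewrite -sz index_mem.
pose tau j := Ordinal (lt j).
have taui : injective tau.
  move=> j1 j2 /(congr1 val) /= e; apply: hi.
  by rewrite -(nth_index (h j1) (hs j1)) e nth_index.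
exists (perm taui) => X; rewrite /coldet /minor -/s.
have -> : \matrix_(i < m, j < m) X i (h j) =
    col_perm (perm taui) (\matrix_(i < m, l < m) oapp (X i) 0 (onth s l)).
  apply/matrixP=> i j; rewrite !mxE permE /= onthE (nth_map (h j)) ?index_mem //=.
  by rewrite nth_index.
by rewrite col_permE det_mulmx det_perm odd_permV mulrC.
Qed.

Lemma coldet_mul_minor X Y h : injective h ->
  coldet X h * coldet Y h =
  minor X [set h j | j in 'I_m] * minor Y [set h j | j in 'I_m].
Proof.
move=> /coldet_minor[t ct].
by rewrite !ct mulrACA -expr2 -signr_odd sqrr_sign mul1r.
Qed.

Lemma coldet_neq0 X h : tnz X -> injective h -> coldet X h != 0.
Proof.
move=> tX hi; have [t ->] := coldet_minor hi.
by rewrite mulf_neq0 ?signr_eq0 // tX // card_imset // card_ord.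
Qed.

Definition free_cols X k (f : 'I_k -> 'I_n) : Prop :=
  forall c : 'I_k -> R, \sum_(i < k) c i *: col (f i) X = 0 -> forall i, c i = 0.

Lemma free_cols_drop X k (f : 'I_k.+1 -> 'I_n) :
  free_cols X f -> free_cols X (f \o lift ord_max).
Proof.
move=> free c comb i.
pose c' l := if unlift ord_max l is Some j then c j else 0.
have := free c' _ (lift ord_max i); rewrite /c' liftK; apply.
rewrite big_ord_recr /= unlift_none scale0r addr0 -[RHS]comb.
apply: eq_bigr => j _.
have -> : widen_ord (leqnSn k) j = lift ord_max j.
  by apply: val_inj; rewrite /= /bump leqNgt ltn_ord.
by rewrite liftK.
Qed.

Lemma extend_injective k (f : 'I_k -> 'I_n) : (k < n)%N -> injective f ->
  exists2 f' : 'I_k.+1 -> 'I_n, injective f' & f' \o lift ord_max =1 f.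
Proof.
move=> kn fi; have [x xf] : exists x, x \notin codom f.
  apply/existsP; apply: contraTT kn => /existsPn allf.
  rewrite -leqNgt -{1}(card_ord n) -(card_ord k) -(card_codom fi).
  by apply/subset_leq_card/subsetP => y _; have := allf y; rewrite negbK.
exists (fun l => if unlift ord_max l is Some j then f j else x); last first.
  by move=> i /=; rewrite liftK.
move=> l1 l2; case: unliftP => [j1 ->|->]; case: unliftP => [j2 ->|->] //.
- by move/fi ->.
- by move=> e; rewrite -e codom_f in xf.
- by move=> e; rewrite e codom_f in xf.
Qed.

(* The columns of a matrix with no vanishing maximal minor form a generic
   arrangement: any injective selection of at most m columns extends to one of
   exactly m columns, whose determinant is nonzero. *)
Lemma tnz_generic X : (m <= n)%N -> tnz X -> generic X.
Proof.
move=> mn tX k f km fi; have [d] := ubnP (m - k).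
elim: d k f km fi => // d IH k f km fi mkd.
have [km_eq|km_neq] := eqVneq k m.
  move: f fi; rewrite km_eq => f fi c comb.
  exact: coldet_cols_free (coldet_neq0 tX fi) comb.
have km_lt : (k < m)%N by rewrite ltn_neqAle km_neq km.
have [f' f'i f'f] := extend_injective (leq_trans km_lt mn) fi.
have /free_cols_drop free_f : free_cols X f' by apply: IH => //; lia.
move=> c comb; apply: free_f; rewrite -[RHS]comb.
by apply: eq_bigr => i _; rewrite f'f.
Qed.

Definition coherent (f : 'I_n -> 'I_n) X Y : Prop :=
  forall h h', injective h -> injective h' ->
  0 < (coldet X h * coldet Y (f \o h)) * (coldet X h' * coldet Y (f \o h')).

Definition minor_coherent X Y : Prop :=
  forall I J : {set 'I_n}, #|I| = m -> #|J| = m ->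
  0 < (minor X I * minor Y I) * (minor X J * minor Y J).

Lemma coldet_perm_act (s : 'S_n) X h :
  coldet (perm_act s X) h = coldet X ((s^-1)%g \o h).
Proof. by congr (\det _); apply/matrixP=> i j; rewrite !mxE. Qed.

Lemma coherent_act (s : 'S_n) X Y :
  coherent s X Y <-> coherent id (perm_act s X) Y.
Proof.
have sK (h : 'I_m -> 'I_n) : s \o ((s^-1)%g \o h) =1 h.
  by move=> l /=; rewrite permKV.
have Ks (h : 'I_m -> 'I_n) : (s^-1)%g \o (s \o h) =1 h.
  by move=> l /=; rewrite permK.
have si (h : 'I_m -> 'I_n) (t : 'S_n) : injective h -> injective (t \o h).
  by move=> hi l1 l2 /perm_inj/hi.
split=> coh h h' hi h'i.
- have := coh _ _ (si h (s^-1)%g hi) (si h' (s^-1)%g h'i).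
  rewrite !coldet_perm_act (coldet_ext Y (sK h)) (coldet_ext Y (sK h')).
  by move=> pos; exact: pos.
- have := coh _ _ (si h s hi) (si h' s h'i).
  rewrite !coldet_perm_act (coldet_ext X (Ks h)) (coldet_ext X (Ks h')).
  by move=> pos; exact: pos.
Qed.

(* Coherence composes through a middle matrix, since (yy')^2 > 0 can be cancelled. *)
Lemma coherent_trans f X Y Z : coherent id X Y -> coherent f Y Z -> coherent f X Z.
Proof.
move=> cXY cYZ h h' hi h'i.
have pXY : 0 < (coldet X h * coldet Y h) * (coldet X h' * coldet Y h').
  exact: cXY.
have pYZ := cYZ h h' hi h'i.
rewrite mulrACA in pXY; rewrite mulrACA in pYZ; rewrite mulrACA.
exact: same_sign_trans pXY pYZ.
Qed.

Lemma coldet_exchange f X Y g k (a b : 'I_m -> R) j :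
  col k X = \sum_l a l *: col (g l) X ->
  col (f k) Y = \sum_l b l *: col (f (g l)) Y ->
  coldet X (upd g j k) * coldet Y (f \o upd g j k) =
  (a j * b j) * (coldet X g * coldet Y (f \o g)).
Proof.
move=> ea eb; rewrite mulrACA (expansion_coef j ea).
rewrite (expansion_coef (h := f \o g) j eb).
by congr (_ * _); apply: coldet_ext => l; rewrite /upd /=; case: eqP.
Qed.

Lemma coherent_coef_sign f X Y g k (a b : 'I_m -> R) j :
  coherent f X Y -> injective g -> k \notin codom g ->
  col k X = \sum_l a l *: col (g l) X ->
  col (f k) Y = \sum_l b l *: col (f (g l)) Y -> 0 < a j * b j.
Proof.
move=> coh gi kg ea eb; have := coh g (upd g j k) gi (upd_inj (j := j) gi kg).
rewrite (coldet_exchange j ea eb); set q := _ * coldet Y _; nra.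
Qed.

(* Conversely, if the columns of X and Y form isomorphic arrangements, then X
   and Y are coherent along the isomorphism: the product of the column
   determinants keeps its sign under reordering (both factors change by the
   same sign) and under exchanges (by the isomorphism condition), so the
   exchange argument applies. *)
Lemma iso_coherent X Y : tnz X -> tnz Y -> iso_arrangement X Y ->
  exists p : 'S_n, coherent p X Y.
Proof.
move=> tX tY [_ [_ [p iso]]]; exists p => h h' hi h'i.
pose Q g := coldet X g * coldet Y (p \o g).
have p_inj (g : 'I_m -> 'I_n) : injective g -> injective (p \o g).
  by move=> gi l1 l2 /perm_inj/gi.
have Q_sq g : injective g -> 0 < Q g * Q g.
  move=> gi; apply/mul_self_gt0/mulf_neq0; apply: coldet_neq0 => //.
  exact: p_inj.
apply: (exchange_const_sign (Q := Q)) => //.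
- move=> g g' e; rewrite /Q (coldet_ext X e); congr (_ * _).
  by apply: coldet_ext => l /=; rewrite e.
- move=> g t gi; have -> : Q (g \o t) = Q g by exact: coldet_perm_mul.
  exact: Q_sq.
- move=> g j k gi kg.
  have [a ea] := coldet_cols_span k (coldet_neq0 tX gi).
  have [b eb] := coldet_cols_span (p k) (coldet_neq0 tY (p_inj g gi)).
  rewrite /Q (coldet_exchange j ea eb) -/(Q g).
  have := iso g k gi kg a b ea eb j; have := Q_sq g gi; nra.
Qed.

Lemma stratum_minor_coherent (C : {set {set 'I_n}}) X Y :
  in_stratum C Y -> in_stratum C X <-> minor_coherent X Y.
Proof.
move=> [tY sY]; split.
- move=> [_ sX] I J cI cJ.
  have [pos|neg] :
      (forall K : {set 'I_n}, #|K| = m -> 0 < minor X K * minor Y K) \/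
      (forall K : {set 'I_n}, #|K| = m -> minor X K * minor Y K < 0).
    case: sX => sX; case: sY => sY; [left|right|right|left] => K cK;
      have [x1 x2] := sX K cK; have [y1 y2] := sY K cK;
      (case: (boolP (K \in C)) => KC;
        [have := x1 KC; have := y1 KC | have := x2 KC; have := y2 KC]); nra.
  + by apply: mulr_gt0; [apply: pos | apply: pos].
  + by have := neg I cI; have := neg J cJ; nra.
- move=> coh; have tX : tnz X.
    move=> I cI; have := coh I I cI cI; apply: contraTneq => ->.
    by rewrite !mul0r ltxx.
  split=> //.
  have [pos|neg] := @const_sign _ {set 'I_n} (fun K => #|K| == m)
    (fun K => minor X K * minor Y K) (fun I J cI cJ => coh I J (eqP cI) (eqP cJ)).
  + case: sY => sY; [left|right] => K cK; have /= := pos K (introT eqP cK);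
      have [y1 y2] := sY K cK; (split=> KC; [have := y1 KC | have := y2 KC]); nra.
  + case: sY => sY; [right|left] => K cK; have /= := neg K (introT eqP cK);
      have [y1 y2] := sY K cK; (split=> KC; [have := y1 KC | have := y2 KC]); nra.
Qed.

Section EnumeratedSubsets.
Hypothesis hmn : (m <= n)%N.

Definition enum_at (I : {set 'I_n}) : 'I_m -> 'I_n :=
  fun l => nth (widen_ord hmn l) (enum I) l.

Lemma enum_at_inj (I : {set 'I_n}) : #|I| = m -> injective (enum_at I).
Proof.
move=> cI l1 l2 e; have sz : size (enum I) = m by rewrite -cardE.
apply/val_inj/eqP.
rewrite -(nth_uniq (widen_ord hmn l1) _ _ (enum_uniq I)) ?sz ?ltn_ord //.
move: e; rewrite /enum_at [in RHS](set_nth_default (widen_ord hmn l1)).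
  by move=> ->.
by rewrite sz ltn_ord.
Qed.

Lemma minor_enum_at X (I : {set 'I_n}) :
  #|I| = m -> minor X I = coldet X (enum_at I).
Proof.
move=> cI; congr (\det _); apply/matrixP=> i l; rewrite !mxE onthE.
by rewrite (nth_map (widen_ord hmn l)) // -cardE cI.
Qed.

Lemma coherent_minorE X Y : coherent id X Y <-> minor_coherent X Y.
Proof.
split=> coh.
- move=> I J cI cJ; rewrite !(minor_enum_at _ cI) !(minor_enum_at _ cJ).
  exact: coh (enum_at_inj cI) (enum_at_inj cJ).
- move=> h h' hi h'i; rewrite /= !coldet_mul_minor //.
  by apply: coh; rewrite card_imset // card_ord.
Qed.

Lemma stratum_coherentE (C : {set {set 'I_n}}) X Y :
  in_stratum C Y -> in_stratum C X <-> coherent id X Y.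
Proof.
move=> sY; rewrite coherent_minorE; exact: stratum_minor_coherent.
Qed.

End EnumeratedSubsets.

End Arrangements.

Theorem mainTheorem1 (R : realType) (m n : nat) (hm : (1 <= m)%N) (hmn : (m <= n)%N)
  (C D : {set {set 'I_n}})
  (hC : forall I, I \in C -> #|I| = m) (hD : forall I, I \in D -> #|I| = m)
  (neC : exists M : 'M[R]_(m, n), in_stratum C M)
  (neD : exists N : 'M[R]_(m, n), in_stratum D N) :
  (exists s : 'S_n, forall M : 'M[R]_(m, n), in_stratum C M -> in_stratum D (perm_act s M))
  <->
  (forall M N : 'M[R]_(m, n), in_stratum C M -> in_stratum D N -> iso_arrangement M N).
Proof.
split.
- move=> [s s_CD] M N sM sN.
  have coh : coherent s M N.
    by apply/coherent_act; apply/(stratum_coherentE hmn _ sN); apply: s_CD.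
  split; first exact: tnz_generic hmn sM.1.
  split; first exact: tnz_generic hmn sN.1.
  by exists s => g k gi kg a b ea eb j; apply: coherent_coef_sign coh gi kg ea eb.
- move=> iso; have [M0 sM0] := neC; have [N0 sN0] := neD.
  have [p coh0] := iso_coherent sM0.1 sN0.1 (iso M0 N0 sM0 sN0).
  exists p => M sM; apply/(stratum_coherentE hmn _ sN0); apply/coherent_act.
  by apply: coherent_trans coh0; apply/(stratum_coherentE hmn _ sM0).
Qed.
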